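(* For a $d$-regular simple graph ($d\ge3$) quantised with equi-transmitting scattering matrices, every $g\in G_2$ satisfies $$\|Mg\|_{\mathbb{C}^{2B}}=\frac{\|g\|_{\mathbb{C}^{2B}}}{d-1}.$$
   Context: For directed bond $b$, $o(b),t(b)$ are origin and terminus, $\bar b$ its reversal. For equi-transmitting quantisation, $M$ is the $2B\times2B$ matrix with $M_{bc}=\frac1{d-1}$ if $t(b)=o(c)$ and $c\ne\bar b$, and $0$ otherwise. $e_v\in\mathbb{C}^{2B}$ has component $1$ on each directed bond with origin $v$, $0$ elsewhere; $G_1=\mathrm{span}\{e_v\}$ and $G_2=G_1^{\perp}$ (orthogonal complement in $\mathbb{C}^{2B}$). *)

From HB Require Import structures.
From mathcomp Require Import all_boot all_order all_algebra all_field.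
Set Implicit Arguments. Unset Strict Implicit. Unset Printing Implicit Defensive.
Import Order.TTheory GRing.Theory Num.Theory.
Local Open Scope ring_scope.

(* Directed bonds are ordered pairs (u,v) with e u v;
   their type is {p : T * T | e p.1 p.2} (a finType with 2B elements). *)
Definition simple_graph (T : finType) (e : rel T) : Prop :=
  symmetric e /\ irreflexive e.

Definition regular (T : finType) (e : rel T) (d : nat) : Prop :=
  forall v : T, #|[set w | e v w]| = d.

Section Bonds.
Variables (T : finType) (e : rel T).
Notation bond := {p : T * T | e p.1 p.2}.

Definition orig (b : bond) : T := (val b).1.
Definition term (b : bond) : T := (val b).2.
Definition is_rev (b c : bond) : bool := val c == (term b, orig b).

Definition Mmat (d : nat) (b c : bond) : algC :=
  if (term b == orig c) && ~~ is_rev b c then (d.-1)%:R^-1 else 0.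

Definition Mapp (d : nat) (g : bond -> algC) : bond -> algC :=
  fun b => \sum_c Mmat d b c * g c.

Definition cdot (f g : bond -> algC) : algC := \sum_b f b * (g b)^*.
Definition cnorm (g : bond -> algC) : algC := sqrtC (\sum_b `|g b| ^+ 2).

Definition evec (v : T) : bond -> algC := fun b => if orig b == v then 1 else 0.

Definition inG1 (x : bond -> algC) : Prop :=
  exists a : T -> algC, forall b, x b = \sum_v a v * evec v b.
Definition inG2 (g : bond -> algC) : Prop :=
  forall x, inG1 x -> cdot x g = 0.
End Bonds.

(* For g orthogonal to every e_v, the values of g on the bonds leaving a
   vertex sum to 0.  The bonds c with t(b) = o(c) and c <> rev b are all the
   bonds leaving t(b) except rev b, so (Mg)(b) = - g(rev b) / (d - 1); since
   reversal permutes the bonds, the norm scales exactly by 1 / (d - 1). *)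
From HB Require Import structures.
From mathcomp Require Import all_boot all_order all_algebra all_field.
Set Implicit Arguments.
Unset Strict Implicit.
Unset Printing Implicit Defensive.
Import Order.TTheory GRing.Theory Num.Theory.
Local Open Scope ring_scope.

Section Bonds.
Variables (T : finType) (e : rel T).
Notation bond := {p : T * T | e p.1 p.2}.

Lemma eq_cnorm (f g : bond -> algC) : f =1 g -> cnorm f = cnorm g.
Proof. by move=> fg; rewrite /cnorm; under eq_bigr do rewrite fg. Qed.

Lemma cnormZ (a : algC) (g : bond -> algC) :
  cnorm (fun b => a * g b) = `|a| * cnorm g.
Proof.
rewrite /cnorm (eq_bigr (fun b => `|a| ^+ 2 * `|g b| ^+ 2)); last first.
  by move=> b _; rewrite normrM exprMn.
rewrite -mulr_sumr sqrtCM ?sqrCK //; rewrite qualifE /=.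
- exact: exprn_ge0.
- by apply: sumr_ge0 => b _; rewrite exprn_ge0.
Qed.

Lemma inG1_evec (v : T) : inG1 (evec (e := e) v).
Proof.
exists (fun w => (w == v)%:R) => b.
rewrite (bigD1 v) //= eqxx mul1r big1 ?addr0 // => w /negbTE->.
by rewrite mul0r.
Qed.

Lemma inG2_sum_orig (g : bond -> algC) : inG2 g ->
  forall v, \sum_(c | orig c == v) g c = 0.
Proof.
move=> g2 v; move/(_ _ (inG1_evec v)): g2; rewrite /cdot.
rewrite (eq_bigr (fun c => if orig c == v then (g c)^* else 0)); last first.
  by move=> c _; rewrite /evec; case: ifP; rewrite ?mul1r ?mul0r.
by rewrite -big_mkcond -rmorph_sum => /eqP; rewrite conjC_eq0 => /eqP.
Qed.

Hypothesis e_sym : symmetric e.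

Lemma rev_subproof (b : bond) : e (term b) (orig b).
Proof. by rewrite e_sym; exact: valP b. Qed.

Definition rev (b : bond) : bond := exist _ (term b, orig b) (rev_subproof b).

Lemma revK : involutive rev.
Proof. by move=> [[x y] h]; apply: val_inj. Qed.

Lemma is_revE (b c : bond) : is_rev b c = (c == rev b).
Proof. by rewrite /is_rev -val_eqE. Qed.

Lemma cnorm_rev (g : bond -> algC) : cnorm (g \o rev) = cnorm g.
Proof.
rewrite /cnorm (reindex_inj (can_inj revK)) /=.
by under eq_bigr do rewrite revK.
Qed.

(* Holds for every d: for d <= 1 both sides vanish, as 0^-1 = 0 in algC. *)
Lemma Mapp_inG2 (d : nat) (g : bond -> algC) :
  inG2 g -> forall b, Mapp d g b = - (d.-1)%:R^-1 * g (rev b).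
Proof.
move=> g2 b; rewrite /Mapp /Mmat.
under eq_bigr do rewrite (fun_if (fun x => x * _)) mul0r.
rewrite -big_mkcond /= -mulr_sumr mulNr -mulrN; congr (_ * _).
have := inG2_sum_orig g2 (term b).
rewrite (bigD1 (rev b)) //= => /eqP; rewrite addrC addr_eq0 => /eqP<-.
by apply: eq_bigl => c; rewrite is_revE eq_sym.
Qed.

End Bonds.

Theorem lemma10 (T : finType) (e : rel T) (d : nat)
  (Hsimple : simple_graph e) (Hreg : regular e d) (Hd : (3 <= d)%N)
  (g : {p : T * T | e p.1 p.2} -> algC) :
  inG2 g ->
  cnorm (Mapp d g) = cnorm g / (d.-1)%:R.
Proof.
move=> g2; have [e_sym _] := Hsimple.
rewrite (eq_cnorm (Mapp_inG2 e_sym d g2)).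
rewrite (cnormZ _ (g \o rev e_sym)) cnorm_rev normrN mulrC.
by rewrite ger0_norm // invr_ge0 ler0n.
Qed.
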